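(* Let $U>0$, $\mu\in\mathbb{R}$, $T\ge0$ and let $(\gamma,\alpha,\rho_0)$ be a minimizer of $\mathcal{F}$ over $\mathcal{D}$. Then $\alpha\equiv0$ if and only if $\rho_0=0$. If $\rho_0>0$, then $\alpha<0$ almost everywhere and $\|\alpha\|_{L^1(\mathbb{T}^3)}<\rho_0$.
   Context: Let $\mathbb{T}^3=[-\pi,\pi]^3$ with periodic identification and normalized Haar measure $dp$. Let $\varepsilon(p)=4\sum_{k=1}^3\sin^2(p_k/2)$. $\mathcal{D}=\{(\gamma,\alpha,\rho_0): \gamma\in L^1(\mathbb{T}^3),\ \gamma\ge0,\ \alpha^2\le\gamma(1+\gamma)\text{ a.e.},\ \rho_0\ge0\}$. With $\beta=\sqrt{(\tfrac12+\gamma)^2-\alpha^2}$, $S(\gamma,\alpha)=\int\big[(\beta+\tfrac12)\ln(\beta+\tfrac12)-(\beta-\tfrac12)\ln(\beta-\tfrac12)\big]dp$, and $\mathcal{F}(\gamma,\alpha,\rho_0)=\int(\varepsilon-\mu)\gamma\,dp-\mu\rho_0-TS(\gamma,\alpha)+\frac U2(\int\alpha)^2+U(\int\gamma)^2+U\rho_0\int\alpha+2U\rho_0\int\gamma+\frac U2\rho_0^2$ (integrals over $\mathbb{T}^3$; entropy term absent at $T=0$). A minimizer is a point of $\mathcal{D}$ attaining $\inf_{\mathcal{D}}\mathcal{F}$. *)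

From HB Require Import structures.
From mathcomp Require Import all_boot all_order all_algebra.
From mathcomp Require Import all_classical all_reals all_analysis.
Set Implicit Arguments. Unset Strict Implicit. Unset Printing Implicit Defensive.
Import Order.TTheory GRing.Theory Num.Theory.
Import numFieldNormedType.Exports.
Local Open Scope classical_set_scope.
Local Open Scope ring_scope.

Section Torus.
Variable R : realType.

Definition pt := ((R * R) * R)%type.

Definition leb3 := ((@lebesgue_measure R \x @lebesgue_measure R) \x @lebesgue_measure R)%E.

(* the fundamental cell [-pi,pi]^3 of the torus *)
Definition torus : set pt :=
  ((`[- pi, pi]%classic `*` `[- pi, pi]%classic) `*` `[- pi, pi]%classic).

(* integral over T^3 w.r.t. normalized Haar measure dp = dp/(2 pi)^3 *)
Definition tint (f : pt -> R) : R :=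
  (Rintegral leb3 torus f) / (2 * pi) ^+ 3.

Definition ae_torus (P : pt -> Prop) : Prop :=
  {ae leb3, forall p, torus p -> P p}.

Definition disp (p : pt) : R :=
  4 * ((sin (p.1.1 / 2)) ^+ 2 + (sin (p.1.2 / 2)) ^+ 2 + (sin (p.2 / 2)) ^+ 2).

Definition xlnx (x : R) : R := if x == 0 then 0 else x * ln x.

Definition betaf (g a : pt -> R) (p : pt) : R :=
  Num.sqrt ((2^-1 + g p) ^+ 2 - (a p) ^+ 2).

Definition entropy (g a : pt -> R) : R :=
  tint (fun p => xlnx (betaf g a p + 2^-1) - xlnx (betaf g a p - 2^-1)).

Definition domD (g a : pt -> R) (rho0 : R) : Prop :=
  measurable_fun torus g /\ leb3.-integrable torus (fun p => (g p)%:E) /\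
  measurable_fun torus a /\
  ae_torus (fun p => 0 <= g p) /\
  ae_torus (fun p => (a p) ^+ 2 <= g p * (1 + g p)) /\
  0 <= rho0.

Definition Ffun (U mu T : R) (g a : pt -> R) (rho0 : R) : R :=
  tint (fun p => (disp p - mu) * g p) - mu * rho0 - T * entropy g a
  + U / 2 * (tint a) ^+ 2 + U * (tint g) ^+ 2 + U * rho0 * tint a
  + 2 * U * rho0 * tint g + U / 2 * rho0 ^+ 2.

Definition is_minimizer (U mu T : R) (g a : pt -> R) (rho0 : R) : Prop :=
  domD g a rho0 /\
  forall g' a' rho0', domD g' a' rho0' -> Ffun U mu T g a rho0 <= Ffun U mu T g' a' rho0'.

End Torus.

(* Changing α at fixed β = sqrt ((1/2 + γ)^2 - α^2) does not change the entropy.  Replacing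
   α by α', γ by γ' = sqrt (β^2 + α'^2) - 1/2 and moving the mass ∫γ - ∫γ' into the
   condensate gives an admissible competitor, so minimality yields an explicit inequality
   between ∫α', ∫α, ρ0 and the kinetic energy.  Scaling α to -t|α| lowers γ (hence the
   kinetic energy, as ε >= 0) by at least (1 - t) ∫(γ + 1/2 - β): with t = 0 this forces
   α = 0 when ρ0 = 0, with t = ρ0 / (∫(γ + 1/2 - β) + ∫|α|) it shows ∫|α| < ρ0 when ρ0 > 0,
   and with t = 1 it shows ∫α = -∫|α|, i.e. α <= 0.  Finally, lowering α to min (α, -δ)
   costs O(δ) per unit of ∫α in γ but gains U (∫α + ρ0) > 0 per unit in the pairing
   energy, so for small δ it forces α <= -δ almost everywhere. *)

From Pilot Require Import Defs.
From HB Require Import structures.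
From mathcomp Require Import all_boot all_order all_algebra.
From mathcomp Require Import all_classical all_reals all_analysis.
From mathcomp Require Import ring lra measurable_realfun.
Import Order.TTheory GRing.Theory Num.Theory.
Import numFieldNormedType.Exports.

Set Implicit Arguments.
Unset Strict Implicit.
Unset Printing Implicit Defensive.
Local Open Scope classical_set_scope.
Local Open Scope ring_scope.

Section ae_Rintegral.
Context d (T : measurableType d) (R : realType) (mu : {measure set T -> \bar R}).
Variables (D : set T) (mD : measurable D).
Implicit Types (f g : T -> R) (P Q : T -> Prop).

Local Notation integrable f := (mu.-integrable D (EFin \o f)).
Local Notation "{ 'aeD' P }" := {ae mu, forall x, D x -> P x}
  (format "{ 'aeD'  P }").

Lemma ae_in_impl P Q : (forall x, D x -> P x -> Q x) -> {aeD P} -> {aeD Q}.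
Proof.
move=> PQ; apply: filterS => x Px Dx; exact/PQ/Px.
Qed.

Lemma ae_in_and P Q : {aeD P} -> {aeD Q} -> {aeD fun x => P x /\ Q x}.
Proof.
by move=> aP aQ; apply: filterS2 aP aQ => x Px Qx Dx; split; [exact: Px|exact: Qx].
Qed.

Lemma ae_le_integrable f g : measurable_fun D f -> integrable g ->
  {aeD fun x => `|f x| <= g x} -> integrable f.
Proof.
move=> mf /integrableP[mg gfin] fg; apply/integrableP; split.
  exact/measurable_EFinP.
apply: le_lt_trans gfin; apply: ae_ge0_le_integral => //.
- by apply: measurableT_comp => //; exact/measurable_EFinP.
- by apply: measurableT_comp => //; exact/measurable_EFinP.
- apply: ae_in_impl fg => x _ fgx /=; rewrite lee_fin (le_trans fgx) //.
  exact: ler_norm.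
Qed.

Lemma integrable_bounded_mul (h f : T -> R) M : measurable_fun D h ->
  (forall x, D x -> `|h x| <= M) -> integrable f -> integrable (fun x => h x * f x).
Proof.
move=> mh hM fi; apply: (@ae_le_integrable _ (fun x => M * `|f x|)).
- by apply: measurable_funM => //; case/integrableP : fi => /measurable_EFinP.
- exact: (integrableZl mD M (integrable_norm fi)).
- by apply: aeW => x Dx; rewrite normrM ler_wpM2r ?hM.
Qed.

Lemma integral_ae_ge0_abs f : integrable f -> {aeD fun x => 0 <= f x} ->
  (\int[mu]_(x in D) (f x)%:E = \int[mu]_(x in D) `|(f x)%:E|)%E.
Proof.
move=> /integrableP[/measurable_EFinP mf _] f0.
apply: ae_eq_integral => //.
- exact/measurable_EFinP.
- by apply: measurableT_comp => //; exact/measurable_EFinP.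
- by apply: ae_in_impl f0 => x _ fx0; rewrite gee0_abs // lee_fin.
Qed.

Lemma Rintegral_ae_ge0 f : integrable f -> {aeD fun x => 0 <= f x} ->
  0 <= \int[mu]_(x in D) f x.
Proof.
move=> fi f0; rewrite /Rintegral (integral_ae_ge0_abs fi f0).
by rewrite fine_ge0 // integral_ge0.
Qed.

Lemma ae_le_Rintegral f g : integrable f -> integrable g ->
  {aeD fun x => f x <= g x} -> \int[mu]_(x in D) f x <= \int[mu]_(x in D) g x.
Proof.
move=> fi gi fg; rewrite -subr_ge0 -RintegralB //.
apply: Rintegral_ae_ge0; first exact: (integrableB mD gi fi).
by apply: ae_in_impl fg => x _; rewrite subr_ge0.
Qed.

Lemma Rintegral_ae_eq0 f : integrable f -> {aeD fun x => 0 <= f x} ->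
  \int[mu]_(x in D) f x = 0 -> {aeD fun x => f x = 0}.
Proof.
move=> fi f0 intf0.
have mf : measurable_fun D (EFin \o f).
  by case/integrableP : fi.
have : ae_eq mu D (EFin \o f) (cst 0%E).
  apply/(ae_eq_integral_abs _ mD mf); rewrite -(integral_ae_ge0_abs fi f0).
  by rewrite -[LHS]fineK ?(integrable_fin_num mD fi) // -/(Rintegral _ _ _) intf0.
by apply: ae_in_impl => x _ [].
Qed.

End ae_Rintegral.

Section sqrt_add_sqr.
Variable R : rcfType.
Implicit Types b x y t : R.

Lemma sqr_sqrt_add_sqr x y : Num.sqrt (x ^+ 2 + y ^+ 2) ^+ 2 = x ^+ 2 + y ^+ 2.
Proof. by rewrite sqr_sqrtr // addr_ge0 ?sqr_ge0. Qed.

Lemma sqrt_le_of_sqr u y : 0 <= y -> u <= y ^+ 2 -> Num.sqrt u <= y.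
Proof. by move=> y0 uy; rewrite -(ger0_norm y0) -sqrtr_sqr ler_wsqrtr. Qed.

Lemma normr_le_sqrt_add_sqr x y : `|x| <= Num.sqrt (x ^+ 2 + y ^+ 2).
Proof. by rewrite -sqrtr_sqr ler_wsqrtr // lerDl sqr_ge0. Qed.

Lemma sqrt_add_sqr_le b x : 0 <= b -> Num.sqrt (b ^+ 2 + x ^+ 2) <= b + `|x|.
Proof.
move=> b0; apply: sqrt_le_of_sqr; first by rewrite addr_ge0.
have x2 : `|x| ^+ 2 = x ^+ 2 by rewrite real_normK ?num_real.
have := normr_ge0 x; nra.
Qed.

Lemma sqrt_add_sqr_convex b x t : 0 <= b -> 0 <= t <= 1 ->
  Num.sqrt (b ^+ 2 + (t * x) ^+ 2) <= (1 - t) * b + t * Num.sqrt (b ^+ 2 + x ^+ 2).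
Proof.
move=> b0 /andP[t0 t1]; set s := Num.sqrt (_ + x ^+ 2).
have bs : b <= s by rewrite -[leLHS]ger0_norm ?normr_le_sqrt_add_sqr.
have s2 : s ^+ 2 = b ^+ 2 + x ^+ 2 := sqr_sqrt_add_sqr b x.
have cross : 0 <= t * (1 - t) * b * (s - b).
  by rewrite !mulr_ge0 ?subr_ge0.
apply: sqrt_le_of_sqr; first by rewrite addr_ge0 ?mulr_ge0 ?subr_ge0 // (le_trans b0).
nra.
Qed.

Lemma sqrt_add_sqr_sub_le b x y : 2^-1 <= b -> x ^+ 2 <= y ^+ 2 ->
  0 <= Num.sqrt (b ^+ 2 + y ^+ 2) - Num.sqrt (b ^+ 2 + x ^+ 2) <= y ^+ 2 - x ^+ 2.
Proof.
move=> b1 xy; set sx := Num.sqrt (_ + x ^+ 2); set sy := Num.sqrt (_ + y ^+ 2).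
have b0 : 0 <= b by apply: le_trans b1; rewrite invr_ge0.
have bsx : b <= sx by rewrite -[leLHS]ger0_norm ?normr_le_sqrt_add_sqr.
have bsy : b <= sy by rewrite -[leLHS]ger0_norm ?normr_le_sqrt_add_sqr.
have e : (sy - sx) * (sy + sx) = y ^+ 2 - x ^+ 2.
  by rewrite -subr_sqr !sqr_sqrt_add_sqr; ring.
have sxy : 0 <= sy - sx by nra.
apply/andP; split => //; nra.
Qed.

End sqrt_add_sqr.

Section energy_arithmetic.
Variable R : realFieldType.

Lemma scaling_absurd (r N d0 d t : R) : 0 < r -> r <= N -> 0 < d0 ->
  t * (d0 + N) = r -> (1 - t) * d0 <= d ->
  2 * ((r + d) ^+ 2 - r ^+ 2) <= (r + d - t * N) ^+ 2 -> False.
Proof.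
move=> r0 rN d00 tr dd K.
have t0 : 0 < t by nra.
have tN : t * d0 <= (1 - t) * N by nra.
have t1 : t < 1 by nra.
have d_ge : 0 < d by nra.
have tN0 : 0 <= t * N by nra.
have dd0 : 2 * r * d <= (t * d0) ^+ 2 by nra.
have dd1 : 2 * r * (1 - t) * d0 <= (t * d0) ^+ 2 by nra.
have : t * d0 * (2 * (d0 + N) * (1 - t)) <= t * d0 * (t * d0).
  by rewrite -tr in dd1; lra.
rewrite ler_pM2l ?mulr_gt0 //; nra.
Qed.

Lemma cut_gain_le0 (U r x c w e delta : R) : 0 < U -> 0 < x -> 0 <= r -> 0 <= c ->
  0 <= w <= delta -> 0 <= e <= 2 * delta * w -> delta <= 1 -> 3 * delta <= x ->
  delta * (2 * c + 4 * U * r) < U * x / 2 ->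
  0 <= c * e + U / 2 * ((x - w - e) ^+ 2 - x ^+ 2) - U * ((r - e) ^+ 2 - r ^+ 2) ->
  w <= 0.
Proof.
move=> U0 x0 r0 c0 /andP[w0 wd] /andP[e0 ew] d1 dx small K.
have e2d : e <= 2 * delta by nra.
have wx : w * x <= (w + e) * (2 * x - w - e) by nra.
have Uwx : U / 2 * (w * x) <= c * e + 2 * U * r * e.
  have : U / 2 * (w * x) <= U / 2 * ((w + e) * (2 * x - w - e)).
    by rewrite ler_pM2l //; lra.
  have : 0 <= U * e ^+ 2 := mulr_ge0 (ltW U0) (sqr_ge0 e).
  lra.
have : w * (U * x / 2 - delta * (2 * c + 4 * U * r)) <= 0.
  have : c * e + 2 * U * r * e <= (2 * c + 4 * U * r) * (delta * w).
    have Ur : 0 <= U * r := mulr_ge0 (ltW U0) r0.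
    nra.
  lra.
have pos : 0 < U * x / 2 - delta * (2 * c + 4 * U * r) by rewrite subr_gt0.
by rewrite (pmulr_lle0 w pos).
Qed.

Lemma cut_below_bounds (x delta : R) : x <= 0 -> 0 < delta ->
  let y := Num.min x (- delta) in
  [/\ 0 <= x - y <= delta, x ^+ 2 <= y ^+ 2 & y ^+ 2 - x ^+ 2 <= 2 * delta * (x - y)].
Proof.
move=> x0 d0 /=; have [xd|dx] := leP x (- delta).
  by rewrite subrr lexx ltW //; split => //; nra.
split; [apply/andP; split|nra|nra]; lra.
Qed.

End energy_arithmetic.

Section torus.
Variable R : realType.
Local Notation Rleb := (g_sigma_algebraType R.-ocitv.-measurable).
Local Notation T3 := ((Rleb * Rleb) * Rleb)%type.
Local Notation torus := (@torus R).
Local Notation leb3 := (@leb3 R).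
Local Notation integrable f := (leb3.-integrable torus (EFin \o f)).
Local Notation measurable_on f := (measurable_fun (torus : set T3) f).
Implicit Types (f g a : pt R -> R).

Lemma measurable_torus : measurable (torus : set T3).
Proof. by apply: measurableX; [apply: measurableX|]; exact: measurable_itv. Qed.

Lemma leb3_torus : leb3 torus = ((2 * pi) ^+ 3 : R)%:E.
Proof.
have leb_itv : lebesgue_measure (`[- pi, pi]%classic : set R) = (2 * pi : R)%:E.
  rewrite lebesgue_measure_itv /= lte_fin gtrN ?pi_gt0 //.
  by rewrite -EFinB opprK -mulr2n mulr_natl.
rewrite /Defs.leb3 /Defs.torus product_measure1E; last 2 first.
- by apply: measurableX; exact: measurable_itv.
- exact: measurable_itv.
rewrite [X in (X * _)%E]product_measure1E; try exact: measurable_itv.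
transitivity ((2 * pi)%:E * (2 * pi)%:E * (2 * pi)%:E : \bar R)%E.
  by congr (_ * _ * _)%E; exact: leb_itv.
by rewrite -!EFinM !exprS expr0 mulr1 mulrA.
Qed.

Lemma torus_volume_gt0 : 0 < (2 * pi) ^+ 3 :> R.
Proof. by rewrite exprn_gt0 // mulr_gt0 // pi_gt0. Qed.

Lemma integrable_cst r : integrable (fun=> r).
Proof.
apply: measurable_bounded_integrable; first exact: measurable_torus.
- (* the measure appears as a [Measure] projection, which [leb3_torus] does not match *)
  by rewrite (_ : _ torus = ((2 * pi) ^+ 3)%:E) ?ltry //; exact: leb3_torus.
- exact: measurable_cst.
- exists `|r|; split; first exact: num_real.
  by move=> x xr y _; rewrite (le_trans _ (ltW xr)).
Qed.

Lemma tint_cst r : tint (fun _ : pt R => r) = r.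
Proof.
rewrite /tint Rintegral_cst; last exact: measurable_torus.
rewrite [fine _](_ : _ = fine ((2 * pi) ^+ 3)%:E); last by congr fine; exact: leb3_torus.
by rewrite mulfK // gt_eqF // torus_volume_gt0.
Qed.

Lemma tintD f g : integrable f -> integrable g ->
  tint (fun p => f p + g p) = tint f + tint g.
Proof. by move=> fi gi; rewrite /tint -mulrDl RintegralD //; exact: measurable_torus. Qed.

Lemma tintB f g : integrable f -> integrable g ->
  tint (fun p => f p - g p) = tint f - tint g.
Proof. by move=> fi gi; rewrite /tint -mulrBl RintegralB //; exact: measurable_torus. Qed.

Lemma tintZ k f : integrable f -> tint (fun p => k * f p) = k * tint f.
Proof. by move=> fi; rewrite /tint mulrA RintegralZl //; exact: measurable_torus. Qed.

Lemma tintN f : integrable f -> tint (fun p => - f p) = - tint f.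
Proof.
move=> fi; rewrite -mulN1r -tintZ //.
by congr tint; apply: funext => p; rewrite mulN1r.
Qed.

Lemma ae_le_tint f g : integrable f -> integrable g ->
  ae_torus (fun p => f p <= g p) -> tint f <= tint g.
Proof.
move=> fi gi fg; rewrite /tint ler_pM2r ?invr_gt0 ?torus_volume_gt0 //.
exact: (ae_le_Rintegral measurable_torus fi gi fg).
Qed.

Lemma tint_ae_ge0 f : integrable f -> ae_torus (fun p => 0 <= f p) -> 0 <= tint f.
Proof. by move=> fi f0; rewrite -(tint_cst 0) ae_le_tint // integrable_cst. Qed.

Lemma tint_ae_eq0 f : integrable f -> ae_torus (fun p => 0 <= f p) ->
  tint f <= 0 -> ae_torus (fun p => f p = 0).
Proof.
move=> fi f0 fle0; apply: (Rintegral_ae_eq0 measurable_torus fi f0).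
have /eqP : tint f = 0 by apply/le_anti; rewrite fle0 tint_ae_ge0.
by rewrite mulf_eq0 invr_eq0 (gt_eqF torus_volume_gt0) orbF => /eqP.
Qed.

Lemma not_ae_torus_False : ~ ae_torus (fun _ : pt R => False).
Proof.
move=> aeF; have : tint (fun _ : pt R => 1) <= tint (fun _ : pt R => 0).
  by rewrite ae_le_tint ?integrable_cst //; apply: ae_in_impl aeF.
by rewrite !tint_cst ler10.
Qed.

Lemma measurable_disp : measurable_on (@disp R).
Proof.
have onT (h : T3 -> R) : measurable_fun setT h -> measurable_on h.
  exact: measurable_funS (@subsetT _ _).
have m1 : measurable_fun [set: T3] (fun p : T3 => p.1) := measurable_fst.
have msin2 (h : T3 -> R) : measurable_on h -> measurable_on (fun p => sin (h p / 2) ^+ 2).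
  move=> mh; apply: measurable_funX.
  apply: (measurableT_comp (continuous_measurable_fun (@continuous_sin R))).
  exact: measurable_funM mh (measurable_cst _).
rewrite /disp; apply: measurable_funM; first exact: measurable_cst.
apply: measurable_funD; first apply: measurable_funD.
- apply: msin2; apply: onT.
  have m11 : measurable_fun [set: Rleb * Rleb] (fun p => p.1) := measurable_fst.
  exact: (measurableT_comp m11 m1).
- apply: msin2; apply: onT.
  have m12 : measurable_fun [set: Rleb * Rleb] (fun p => p.2) := measurable_snd.
  exact: (measurableT_comp m12 m1).
- by apply: msin2; apply: onT; exact: measurable_snd.
Qed.

Lemma disp_ge0_le12 (p : pt R) : 0 <= disp p <= 12.
Proof.
have sin2 (x : R) : 0 <= sin x ^+ 2 <= 1.
  by rewrite sqr_ge0 /= sin2cos2 lerBlDr lerDl sqr_ge0.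
move: (sin2 (p.1.1 / 2)) (sin2 (p.1.2 / 2)) (sin2 (p.2 / 2)).
by rewrite /disp => /andP[? ?] /andP[? ?] /andP[? ?]; apply/andP; split; lra.
Qed.

Lemma integrable_disp_mul f : integrable f -> integrable (fun p => disp p * f p).
Proof.
apply: (integrable_bounded_mul measurable_torus measurable_disp (M := 12)).
by move=> p _; have /andP[d0 d12] := disp_ge0_le12 p; rewrite ger0_norm.
Qed.

Lemma tint_dispB_mul c f : integrable f ->
  tint (fun p => (disp p - c) * f p) = tint (fun p => disp p * f p) - c * tint f.
Proof.
move=> fi; rewrite -tintZ // -tintB ?integrable_disp_mul //; last first.
  exact: (integrableZl measurable_torus c fi).
by congr tint; apply: funext => p; rewrite mulrBl.
Qed.

Lemma measurable_betaf g a : measurable_on g -> measurable_on a ->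
  measurable_on (betaf g a).
Proof.
move=> mg ma; apply: (measurableT_comp (continuous_measurable_fun (@sqrt_continuous R))).
apply: measurable_funB; apply: measurable_funX => //.
by apply: measurable_funD => //; exact: measurable_cst.
Qed.

Lemma domD_ae g a rho0 : domD g a rho0 -> ae_torus (fun p =>
  2^-1 <= betaf g a p /\ g p + 2^-1 = Num.sqrt (betaf g a p ^+ 2 + a p ^+ 2)).
Proof.
case=> _ [_ [_ [g0 [ag _]]]]; apply: ae_in_impl (ae_in_and g0 ag) => p _ [gp0 agp].
have quarter : 2^-1 ^+ 2 <= (2^-1 + g p) ^+ 2 - a p ^+ 2 by nra.
have b2 : betaf g a p ^+ 2 = (2^-1 + g p) ^+ 2 - a p ^+ 2.
  by rewrite sqr_sqrtr // (le_trans _ quarter) ?sqr_ge0.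
split; first by rewrite -[leLHS]ger0_norm ?invr_ge0 // -sqrtr_sqr ler_wsqrtr.
by rewrite b2 subrK sqrtr_sqr ger0_norm addrC // addr_ge0 ?invr_ge0.
Qed.

Lemma domD_integrable g a rho0 : domD g a rho0 ->
  integrable a /\ integrable (betaf g a).
Proof.
move=> dom; have := domD_ae dom; case: dom => mg [gi [ma _]] hae.
have gi' : integrable (fun p => g p + 2^-1).
  exact: (integrableD measurable_torus gi (integrable_cst _)).
split; apply: (ae_le_integrable measurable_torus _ gi').
- exact: ma.
- by apply: ae_in_impl hae => p _ [_ ->]; rewrite addrC normr_le_sqrt_add_sqr.
- exact: measurable_betaf.
- apply: ae_in_impl hae => p _ [b1 ->].
  by rewrite ger0_norm ?sqrtr_ge0 // -[leLHS]ger0_norm ?sqrtr_ge0 // normr_le_sqrt_add_sqr.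
Qed.

(* On [domD], [g + 1/2 = sqrt (β^2 + a^2)] a.e. (see [domD_ae]); [gamma_same_beta g a a']
   is the γ that keeps the β of [(g, a)] when [a] is replaced by [a']. *)
Definition gamma_same_beta g a (a' : pt R -> R) (p : pt R) : R :=
  Num.sqrt (betaf g a p ^+ 2 + a' p ^+ 2) - 2^-1.

Lemma betaf_gamma_same_beta g a (a' : pt R -> R) :
  betaf (gamma_same_beta g a a') a' = betaf g a.
Proof.
apply: funext => p; rewrite /betaf /gamma_same_beta addrCA subrr addr0.
by rewrite sqr_sqrt_add_sqr addrK sqrtr_sqr ger0_norm // sqrtr_ge0.
Qed.

Section gamma_same_beta_admissible.
Variables (g a : pt R -> R) (rho0 : R).
Hypothesis dom : domD g a rho0.
Variable a' : pt R -> R.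
Hypotheses (ma' : measurable_on a') (ia' : integrable a').

Lemma gamma_same_beta_ae_bounds : ae_torus (fun p =>
  0 <= gamma_same_beta g a a' p /\ gamma_same_beta g a a' p <= g p + `|a' p| /\
  a' p ^+ 2 <= gamma_same_beta g a a' p * (1 + gamma_same_beta g a a' p)).
Proof.
apply: ae_in_impl (domD_ae dom) => p _ [b1 gs]; rewrite /gamma_same_beta.
have b0 : 0 <= betaf g a p by rewrite (le_trans _ b1) ?invr_ge0.
have bg : betaf g a p <= g p + 2^-1.
  by rewrite gs -[leLHS]ger0_norm // normr_le_sqrt_add_sqr.
have := sqrt_add_sqr_le (a' p) b0; have := sqr_sqrt_add_sqr (betaf g a p) (a' p).
have := normr_le_sqrt_add_sqr (betaf g a p) (a' p); rewrite ger0_norm //.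
set s := Num.sqrt _ => bs s2 sle; split; [lra | split; [lra | nra]].
Qed.

Lemma measurable_gamma_same_beta : measurable_on (gamma_same_beta g a a').
Proof.
case: dom => mg [_ [ma _]]; apply: measurable_funB; last exact: measurable_cst.
apply: (measurableT_comp (continuous_measurable_fun (@sqrt_continuous R))).
by apply: measurable_funD; apply: measurable_funX => //; exact: measurable_betaf.
Qed.

Lemma integrable_gamma_same_beta : integrable (gamma_same_beta g a a').
Proof.
case: dom => _ [gi _].
apply: (ae_le_integrable measurable_torus measurable_gamma_same_beta).
  exact: (integrableD measurable_torus gi (integrable_norm ia')).
by apply: ae_in_impl gamma_same_beta_ae_bounds => p _ [g0 [gle _]]; rewrite ger0_norm.
Qed.

Lemma domD_gamma_same_beta rho0' : 0 <= rho0' ->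
  domD (gamma_same_beta g a a') a' rho0'.
Proof.
move=> r0; split; first exact: measurable_gamma_same_beta.
split; first exact: integrable_gamma_same_beta.
split; first exact: ma'.
split; first by apply: ae_in_impl gamma_same_beta_ae_bounds => p _ [].
by split => //; apply: ae_in_impl gamma_same_beta_ae_bounds => p _ [_ []].
Qed.

End gamma_same_beta_admissible.

Lemma Ffun_sub_same_beta U mu T g a rho0 (g' a' : pt R -> R) rho0' :
  integrable g -> integrable g' -> betaf g' a' = betaf g a ->
  rho0' + tint g' = rho0 + tint g ->
  Ffun U mu T g' a' rho0' - Ffun U mu T g a rho0 =
    tint (fun p => disp p * (g' p - g p))
    + U / 2 * ((tint a' + rho0') ^+ 2 - (tint a + rho0) ^+ 2)
    - U * (rho0' ^+ 2 - rho0 ^+ 2).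
Proof.
(* The entropy only sees β, the chemical potential only the total density ρ0 + ∫γ. *)
move=> gi g'i sameb density; rewrite /Ffun /entropy sameb !tint_dispB_mul //.
have -> : tint (fun p => disp p * (g' p - g p)) =
    tint (fun p => disp p * g' p) - tint (fun p => disp p * g p).
  rewrite -tintB ?integrable_disp_mul //.
  by congr tint; apply: funext => p; rewrite mulrBr.
have -> : rho0' = rho0 + tint g - tint g' by rewrite -density addrK.
by field.
Qed.

Lemma minimizer_gamma_same_beta U mu T g a rho0 (a' : pt R -> R) rho0' :
  is_minimizer U mu T g a rho0 -> measurable_on a' -> integrable a' ->
  0 <= rho0' -> rho0' + tint (gamma_same_beta g a a') = rho0 + tint g ->
  0 <= tint (fun p => disp p * (gamma_same_beta g a a' p - g p))
       + U / 2 * ((tint a' + rho0') ^+ 2 - (tint a + rho0) ^+ 2)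
       - U * (rho0' ^+ 2 - rho0 ^+ 2).
Proof.
move=> [dom opt] ma' ia' r0 density.
have gi : integrable g by case: dom => _ [].
have g'i := integrable_gamma_same_beta dom ma' ia'.
rewrite -(Ffun_sub_same_beta U mu T gi g'i (betaf_gamma_same_beta g a a') density) subr_ge0.
exact: opt (domD_gamma_same_beta dom ma' ia' r0).
Qed.

Section minimizer.
Variables (U mu T : R) (g a : pt R -> R) (rho0 : R).
Hypotheses (U_gt0 : 0 < U) (gamin : is_minimizer U mu T g a rho0).
Local Notation A := (tint a).
Local Notation N := (tint (fun p => `|a p|)).
Local Notation gap := (fun p => g p + 2^-1 - betaf g a p).
Local Notation d0 := (tint gap).
(* the mass that γ loses, and the condensate gains, when [a] becomes [a'] at fixed β *)
Local Notation drop a' := (tint g - tint (gamma_same_beta g a a')).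
Local Notation scaled t := (fun p => - (t * `|a p|)).
Local Notation cut delta := (fun p => Num.min (a p) (- delta)).

Let dom : domD g a rho0 := gamin.1.
Let gi : integrable g := dom.2.1.
Let ma : measurable_on a := dom.2.2.1.
Let ia : integrable a := (domD_integrable dom).1.
Let ia_norm : integrable (fun p => `|a p|) := integrable_norm ia.
Let rho0_ge0 : 0 <= rho0 := dom.2.2.2.2.2.

Let gap_integrable : integrable gap.
Proof.
have gi' := integrableD measurable_torus gi (integrable_cst (2^-1 : R)).
exact: (integrableB measurable_torus gi' (domD_integrable dom).2).
Qed.

Lemma gap_ae_ge0 : ae_torus (fun p => 0 <= gap p).
Proof.
apply: ae_in_impl (domD_ae dom) => p _ [b1 ->]; rewrite subr_ge0.
by rewrite -[leLHS]ger0_norm ?sqrtr_ge0 // normr_le_sqrt_add_sqr.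
Qed.

Lemma gap_tint_ge0 : 0 <= d0.
Proof. exact: tint_ae_ge0 gap_integrable gap_ae_ge0. Qed.

Lemma gap_tint_le0_a_eq0 : d0 <= 0 -> ae_torus (fun p => a p = 0).
Proof.
move=> /(tint_ae_eq0 gap_integrable gap_ae_ge0) gap0.
apply: ae_in_impl (ae_in_and gap0 (domD_ae dom)) => p _ [gp [_ gs]].
have : Num.sqrt (betaf g a p ^+ 2 + a p ^+ 2) ^+ 2 = betaf g a p ^+ 2.
  by rewrite -gs; congr (_ ^+ 2); lra.
rewrite sqr_sqrt_add_sqr => h; have /eqP : a p ^+ 2 = 0 by lra.
by rewrite sqrf_eq0 => /eqP.
Qed.

Lemma minimizer_gamma_decrease a' : measurable_on a' -> integrable a' ->
  ae_torus (fun p => gamma_same_beta g a a' p <= g p) ->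
  (A + rho0) ^+ 2 + 2 * ((rho0 + drop a') ^+ 2 - rho0 ^+ 2)
    <= (tint a' + (rho0 + drop a')) ^+ 2.
Proof.
move=> ma' ia' g'g; have g'i := integrable_gamma_same_beta dom ma' ia'.
have drop_ge0 : 0 <= drop a'.
  by rewrite subr_ge0; apply: ae_le_tint.
have density : rho0 + drop a' + tint (gamma_same_beta g a a') = rho0 + tint g.
  by rewrite -addrA subrK.
have := minimizer_gamma_same_beta gamin ma' ia' (addr_ge0 rho0_ge0 drop_ge0) density.
have X_le0 : tint (fun p => disp p * (gamma_same_beta g a a' p - g p)) <= 0.
  rewrite -(tint_cst 0) ae_le_tint ?integrable_cst ?integrable_disp_mul //.
    exact: (integrableB measurable_torus g'i gi).
  apply: ae_in_impl g'g => p _ g'gp; rewrite mulr_ge0_le0 ?subr_le0 //.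
  by case/andP: (disp_ge0_le12 p).
move=> K; rewrite -subr_ge0 -(pmulr_rge0 _ (divr_gt0 U_gt0 (ltr0n _ 2))).
by apply: le_trans K _; lra.
Qed.

Lemma scaled_ae_bounds t : 0 <= t <= 1 -> ae_torus (fun p =>
  gamma_same_beta g a (scaled t) p <= g p /\
  (1 - t) * gap p <= g p - gamma_same_beta g a (scaled t) p).
Proof.
move=> t01; have t1 : 0 <= 1 - t by rewrite subr_ge0; case/andP: t01.
apply: ae_in_impl (ae_in_and gap_ae_ge0 (domD_ae dom)) => p _ [gp0 [b1 gs]].
have b0 : 0 <= betaf g a p by rewrite (le_trans _ b1) ?invr_ge0.
have a'2 : scaled t p ^+ 2 = (t * a p) ^+ 2.
  by rewrite sqrrN !exprMn real_normK ?num_real.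
have := sqrt_add_sqr_convex (a p) b0 t01.
rewrite /gamma_same_beta a'2 -gs; have := mulr_ge0 t1 gp0.
by move: gp0 => /= gp0 tgap conv; split; nra.
Qed.

Lemma minimizer_scale t : 0 <= t <= 1 -> exists d, (1 - t) * d0 <= d /\
  (A + rho0) ^+ 2 + 2 * ((rho0 + d) ^+ 2 - rho0 ^+ 2) <= (rho0 + d - t * N) ^+ 2.
Proof.
move=> t01; have shrink := scaled_ae_bounds t01.
have ma' : measurable_on (scaled t).
  apply/measurable_funN/measurable_funM; first exact: measurable_cst.
  exact: measurableT_comp.
have itN := integrableZl measurable_torus t ia_norm.
have ia' : integrable (scaled t) := integrableN itN.
have g'i := integrable_gamma_same_beta dom ma' ia'.
exists (drop (scaled t)); split.
  rewrite -tintZ // -tintB //; apply: ae_le_tint => //.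
    exact: (integrableZl measurable_torus _ gap_integrable).
  exact: (integrableB measurable_torus gi g'i).
  by apply: ae_in_impl shrink => p _ [].
have g'g : ae_torus (fun p => gamma_same_beta g a (scaled t) p <= g p).
  by apply: ae_in_impl shrink => p _ [].
have := minimizer_gamma_decrease ma' ia' g'g.
by rewrite tintN // tintZ // [- _ + _]addrC.
Qed.

Lemma cut_ae_bounds delta : 0 < delta -> ae_torus (fun p => a p <= 0) ->
  ae_torus (fun p => [/\ 0 <= a p - cut delta p <= delta,
    0 <= gamma_same_beta g a (cut delta) p - g p &
    gamma_same_beta g a (cut delta) p - g p <= 2 * delta * (a p - cut delta p)]).
Proof.
move=> d0 a_le0; apply: ae_in_impl (ae_in_and a_le0 (domD_ae dom)) => p _ [ap0 [b1 gs]].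
have [/andP[ad0 ad1] aa' a'a] := cut_below_bounds ap0 d0.
have /andP[] := sqrt_add_sqr_sub_le b1 aa'.
by rewrite /gamma_same_beta -gs => s0 s1; split; rewrite ?ad0 ?ad1 //; lra.
Qed.

Lemma measurable_cut delta : measurable_on (cut delta).
Proof. by apply: measurable_minr => //; exact: measurable_cst. Qed.

Lemma integrable_cut delta : 0 < delta -> ae_torus (fun p => a p <= 0) ->
  integrable (cut delta).
Proof.
move=> d0 a_le0.
apply: (ae_le_integrable measurable_torus (measurable_cut delta)).
  exact: (integrableD measurable_torus ia_norm (integrable_cst delta)).
apply: ae_in_impl a_le0 => p _ ap0; have [/andP[_ ad] _ _] := cut_below_bounds ap0 d0.
have cut_le0 : cut delta p <= 0 by rewrite ge_min ap0.
by rewrite !ler0_norm //; lra.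
Qed.

Lemma minimizer_cut delta : 0 < delta <= 1 -> 2 * delta <= rho0 ->
  ae_torus (fun p => a p <= 0) -> exists w e, [/\ 0 <= w <= delta,
    0 <= e <= 2 * delta * w,
    0 <= 12 * e + U / 2 * ((A + rho0 - w - e) ^+ 2 - (A + rho0) ^+ 2)
         - U * ((rho0 - e) ^+ 2 - rho0 ^+ 2)
  & w <= 0 -> ae_torus (fun p => a p <= - delta)].
Proof.
move=> /andP[d0 d1] drho a_le0; have bounds := cut_ae_bounds d0 a_le0.
have ma' := measurable_cut delta; have ia' := integrable_cut d0 a_le0.
have g'i := integrable_gamma_same_beta dom ma' ia'.
set g' := gamma_same_beta g a (cut delta) in g'i bounds *.
have iw : integrable (fun p => a p - cut delta p) := integrableB measurable_torus ia ia'.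
have ie : integrable (fun p => g' p - g p) := integrableB measurable_torus g'i gi.
set w := tint (fun p => a p - cut delta p); set e := - drop (cut delta).
have eE : e = tint (fun p => g' p - g p) by rewrite /e tintB // opprB.
have w0 : 0 <= w by apply: tint_ae_ge0 => //; apply: ae_in_impl bounds => p _ [/andP[]].
have wd : w <= delta.
  rewrite -(tint_cst delta); apply: ae_le_tint => //; first exact: integrable_cst.
  by apply: ae_in_impl bounds => p _ [/andP[]].
have e0 : 0 <= e.
  by rewrite eE; apply: tint_ae_ge0 => //; apply: ae_in_impl bounds => p _ [].
have ew : e <= 2 * delta * w.
  rewrite eE -tintZ //; apply: ae_le_tint => //.
    exact: (integrableZl measurable_torus _ iw).
  by apply: ae_in_impl bounds => p _ [].
have X_le : tint (fun p => disp p * (g' p - g p)) <= 12 * e.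
  rewrite eE -tintZ //; apply: ae_le_tint; [exact: integrable_disp_mul
    | exact: (integrableZl measurable_torus _ ie) |].
  apply: ae_in_impl bounds => p _ [_ ge0 _]; rewrite ler_wpM2r //.
  by case/andP: (disp_ge0_le12 p).
have e_rho : 0 <= rho0 - e by rewrite subr_ge0; nra.
have density : rho0 - e + tint g' = rho0 + tint g by rewrite /e opprK addrA subrK.
have K := minimizer_gamma_same_beta gamin ma' ia' e_rho density.
exists w, e; split; rewrite ?w0 ?wd ?e0 ?ew //.
  have ta' : tint (cut delta) = A - w by rewrite /w tintB // opprB addrC subrK.
  by rewrite ta' in K; lra.
move=> w_le0; have aa' : ae_torus (fun p => a p - cut delta p = 0).
  by apply: tint_ae_eq0 => //; apply: ae_in_impl bounds => p _ [/andP[]].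
apply: ae_in_impl aa' => p _ /eqP; rewrite subr_eq0 => /eqP ->.
by rewrite ge_min lexx orbT.
Qed.

Lemma tint_norm_ge0 : 0 <= N.
Proof. by apply: tint_ae_ge0 => //; exact: aeW. Qed.

Lemma tint_ge_oppN : - N <= A.
Proof.
rewrite -tintN //; apply: ae_le_tint => //; first exact: (integrableN ia_norm).
by apply: aeW => p _; rewrite lerNl -normrN ler_norm.
Qed.

Lemma minimizer_rho0_eq0 : rho0 = 0 -> ae_torus (fun p => a p = 0).
Proof.
move=> r0; apply: gap_tint_le0_a_eq0; have := gap_tint_ge0.
have [|d [dd]] := minimizer_scale (t := 0); first by rewrite lexx ler01.
by rewrite r0; nra.
Qed.

Lemma minimizer_N_lt_rho0 : 0 < rho0 -> N < rho0.
Proof.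
move=> r0; rewrite ltNge; apply/negP => Nr.
have d0_pos : 0 < d0.
  rewrite lt_def gap_tint_ge0 andbT; apply/eqP => d00.
  have a0 : ae_torus (fun p => a p = 0) by apply: gap_tint_le0_a_eq0; rewrite d00.
  have : N <= 0.
    rewrite -(tint_cst 0); apply: ae_le_tint => //; first exact: integrable_cst.
    by apply: ae_in_impl a0 => p _ ->; rewrite normr0.
  lra.
(* [t := rho0 / (d0 + N)] is chosen so that [rho0 - t * N = t * d0]. *)
have dN0 : 0 < d0 + N by rewrite ltr_wpDr // (le_trans (ltW r0)).
have t01 : 0 <= rho0 / (d0 + N) <= 1.
  rewrite divr_ge0 ?(ltW r0) ?(ltW dN0) //= ler_pdivrMr // mul1r.
  by have := gap_tint_ge0; lra.
have [d [dd K]] := minimizer_scale t01.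
apply: (scaling_absurd r0 Nr d0_pos _ dd); first by rewrite divfK // gt_eqF.
by have := sqr_ge0 (A + rho0); lra.
Qed.

Lemma minimizer_a_le0 : 0 < rho0 -> ae_torus (fun p => a p <= 0).
Proof.
move=> r0; have Nr := minimizer_N_lt_rho0 r0.
have [|d [dd K]] := minimizer_scale (t := 1); first by rewrite lexx ler01.
rewrite subrr mul0r mul1r in dd K.
have := tint_ge_oppN; have := tint_norm_ge0 => N0 AN.
have A_le : A + rho0 <= rho0 - N by nra.
have ia_abs : integrable (fun p => a p + `|a p|) := integrableD measurable_torus ia ia_norm.
have a_abs : ae_torus (fun p => a p + `|a p| = 0).
  apply: tint_ae_eq0 => //; last by rewrite tintD //; lra.
  by apply: aeW => p _; have := ler_norm (- a p); rewrite normrN; lra.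
by apply: ae_in_impl a_abs => p _; have := normr_ge0 (a p); lra.
Qed.

Lemma minimizer_a_lt0 : 0 < rho0 -> ae_torus (fun p => a p < 0).
Proof.
move=> r0; have Nr := minimizer_N_lt_rho0 r0; have a_le0 := minimizer_a_le0 r0.
have A_le0 : A <= 0.
  by rewrite -(tint_cst 0); apply: ae_le_tint => //; exact: integrable_cst.
have x0 : 0 < A + rho0 by have := tint_ge_oppN; lra.
have Ur0 : 0 <= U * rho0 := mulr_ge0 (ltW U_gt0) (ltW r0).
(* [delta] is small enough for [cut_gain_le0] with [c = 12 >= disp]. *)
pose delta := Num.min 1 (U * (A + rho0) / (3 * U + 2 * (24 + 4 * U * rho0))).
have delta0 : 0 < delta.
  by rewrite lt_min ltr01 /=; apply: divr_gt0; [exact: mulr_gt0 | nra].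
have delta1 : delta <= 1 by rewrite /delta ge_min lexx.
have dx : delta * (3 * U + 2 * (24 + 4 * U * rho0)) <= U * (A + rho0).
  by rewrite -ler_pdivlMr; [rewrite /delta ge_min lexx orbT | nra].
have delta_ok : 0 < delta <= 1 by rewrite delta0 delta1.
have delta_c : 0 <= delta * (24 + 4 * U * rho0).
  by rewrite mulr_ge0 ?(ltW delta0) //; lra.
have UA : U * A <= 0 := mulr_ge0_le0 (ltW U_gt0) A_le0.
have delta_x : U * (3 * delta) <= U * (A + rho0) by lra.
have delta_rho : 2 * delta <= rho0.
  by move: delta_x; rewrite ler_pM2l //; lra.
have [w [e [w_ok e_ok K cut_a]]] := minimizer_cut delta_ok delta_rho a_le0.
have : w <= 0.
  apply: (cut_gain_le0 (c := 12) U_gt0 x0 (ltW r0) _ w_ok e_ok delta1 _ _ K) => //.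
  - by rewrite -(ler_pM2l U_gt0).
  - by have := mulr_gt0 U_gt0 delta0; lra.
by move/cut_a; apply: ae_in_impl => p _; lra.
Qed.

End minimizer.

End torus.

Theorem proposition4p1 (R : realType) (U mu T : R) (g a : pt R -> R) (rho0 : R) :
  0 < U -> 0 <= T -> is_minimizer U mu T g a rho0 ->
  ((ae_torus (fun p => a p = 0)) <-> rho0 = 0) /\
  (0 < rho0 ->
     ae_torus (fun p => a p < 0) /\ tint (fun p => `|a p|) < rho0).
Proof.
move=> U_gt0 _ gamin; have rho0_ge0 : 0 <= rho0 := gamin.1.2.2.2.2.2.
have a_lt0 := minimizer_a_lt0 U_gt0 gamin.
split; last by move=> r0; split; [exact: a_lt0 | exact: minimizer_N_lt_rho0 U_gt0 gamin r0].
split => [a0|]; last exact: minimizer_rho0_eq0 U_gt0 gamin.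
apply/eqP; rewrite eq_le rho0_ge0 andbT leNgt; apply/negP => r0.
apply: not_ae_torus_False; apply: ae_in_impl (ae_in_and a0 (a_lt0 r0)).
by move=> p _ [->]; rewrite ltxx.
Qed.
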